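(* Let $\mathcal{B}$ be a unital Banach algebra, $q\in\mathbb{C}$ with $0<|q|<1$, and $x,y\in\mathcal{B}$ with $xy=q^{-1}yx$, such that the spectrum $\sigma(x)$ of $x$ in $\mathcal{B}$ satisfies $\sigma(x)_q=\sigma(x)$. Then every finite sum $f=\sum_{k\ge1}r_k(x)y^k$, where each $r_k$ is a rational function with no poles on $\sigma(x)$ and $r_k(0)=0$, is quasinilpotent in $\mathcal{B}$ (equivalently, in the closed subalgebra $\mathcal{A}_{q,x}$).
   Context: For $S\subseteq\mathbb{C}$, $S_q=\{0\}\cup\bigcup_{n\ge0}q^nS$ is its $q$-hull. For a rational function $r$ without poles on $\sigma(x)$, $r(x)\in\mathcal{B}$ is defined by the holomorphic (rational) functional calculus. $\mathcal{A}_{q,x}$ is the norm closure in $\mathcal{B}$ of the subalgebra generated by $y$ and all such $r(x)$. Quasinilpotent means spectrum $\{0\}$ (spectral radius zero). *)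

From mathcomp Require Import all_boot all_order all_algebra.
From mathcomp Require Import complex.
From mathcomp Require Import boolp classical_sets reals.
Set Implicit Arguments. Unset Strict Implicit. Unset Printing Implicit Defensive.
Import Order.TTheory GRing.Theory Num.Theory.
Local Open Scope classical_set_scope.
Local Open Scope ring_scope.

(* A complex unital Banach algebra is a (nontrivial) unital C-algebra
   B : unitAlgType R[i] (whose unit predicate is two-sided invertibility,
   cf. unitrP) equipped with a norm nrm : B -> R which is a complete,
   submultiplicative algebra norm with nrm 1 = 1. *)
Definition is_banach_algebra_norm (R : realType) (B : unitAlgType R[i])
    (nrm : B -> R) : Prop :=
  (forall x, 0 <= nrm x) /\
      (forall x, nrm x = 0 -> x = 0) /\
      (forall x y, nrm (x + y) <= nrm x + nrm y) /\
      (forall (a : R[i]) x, ((nrm (a *: x))%:C)%C = `|a| * ((nrm x)%:C)%C) /\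
      (forall x y, nrm (x * y) <= nrm x * nrm y) /\
      nrm 1 = 1 /\
      (forall u : nat -> B,
         (forall e : R, 0 < e -> exists N : nat, forall m n : nat,
            (N <= m)%N -> (N <= n)%N -> nrm (u m - u n) < e) ->
         exists l : B, forall e : R, 0 < e -> exists N : nat, forall n : nat,
            (N <= n)%N -> nrm (u n - l) < e).

Definition spectrum (R : realType) (B : unitAlgType R[i]) (x : B) : set R[i] :=
  [set l | ~ (l%:A - x \is a GRing.unit)].

Definition qhull (R : realType) (q : R[i]) (S : set R[i]) : set R[i] :=
  [set z | z = 0 \/ exists n : nat, exists2 s, S s & z = q ^+ n * s].

(* value r(x) of the rational function r = p / d (d without zeros on the
   spectrum of x, so d(x) is invertible) under the rational functional
   calculus: r(x) = p(x) d(x)^{-1} *)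
Definition rat_at (R : realType) (B : unitAlgType R[i])
  (p d : {poly R[i]}) (x : B) : B :=
  horner_alg x p * (horner_alg x d)^-1.

Definition quasinilpotent (R : realType) (B : unitAlgType R[i]) (x : B) :=
  spectrum x = [set 0].

From mathcomp Require Import all_boot all_order all_algebra.
From mathcomp Require Import complex.
From mathcomp Require Import boolp classical_sets reals.
From mathcomp Require Import ring lra.
From mathcomp Require Import topology normedtype sequences.
Import Order.TTheory GRing.Theory Num.Theory.
Local Open Scope classical_set_scope.
Local Open Scope ring_scope.

(* Moving [y] to the right across [x] multiplies by [q]: [y^k r(x) = r(q^k x) y^k].
   Hence in [f^N] every monomial is [a y^k] with [k >= N] and [a] a product of
   factors [r_j(q^m x)], [m < N]; since [r_j(0) = 0] and [d_j] has no zero on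
   the [q]-invariant spectrum, [|r_j(q^m x)| <= C |q|^m].  So
   [|f^N| <= prod_(m < N) C Z |q|^m] with [Z = sum_j |y|^(j+1)], which decays
   faster than any geometric sequence and forces the spectrum of [f] to be [{0}]. *)

Local Notation normc := Normc.normc.

Section ComplexModulus.
Context {R : realType}.

Implicit Types a : R[i].

Lemma normcE a : `|a| = (normc a)%:C%C.
Proof. by case: a. Qed.

Lemma normc_ge0 a : 0 <= normc a.
Proof. by rewrite -lecR -normcE normr_ge0. Qed.

Lemma normc_gt0 a : (0 < normc a) = (a != 0).
Proof. by rewrite -ltcR -normcE normr_gt0. Qed.

Lemma normcX a k : normc (a ^+ k) = normc a ^+ k.
Proof. by apply: complexI; rewrite rmorphXn -!normcE normrX. Qed.

End ComplexModulus.

Section GeometricIdentity.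
Context {A : pzRingType} (g : A).

Lemma commr1B_sum_expr n : GRing.comm (1 - g) (\sum_(i < n) g ^+ i).
Proof.
apply: commr_sum => i _; apply: commrX.
exact: commr_sym (commrB (commr1 g) (commr_refl g)).
Qed.

Lemma mulr1B_sum_expr n : (1 - g) * \sum_(i < n) g ^+ i = 1 - g ^+ n.
Proof. by rewrite -[1 - g]opprB mulNr -subrX1 opprB. Qed.

End GeometricIdentity.

Section RealSequences.
Context {R : realType}.

Lemma geometric_le_eventually (c : R) {r e : R} : `|r| < 1 -> 0 < e ->
  exists N, forall n, (N <= n)%N -> c * r ^+ n <= e.
Proof.
move=> r1 e0; have /(_ _ e0) [N _ hN] := @cvgr0_norm_lt R _ _ _ eventually_filter
  (_ : nat -> R^o) (cvg_geometric c r1).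
by exists N => n /hN /= /ltW; apply: le_trans (ler_norm _).
Qed.

Lemma geometric_tail_le (t : R) n m : 0 <= t < 1 ->
  \sum_(n <= i < n + m) t ^+ i <= t ^+ n / (1 - t).
Proof.
case/andP => t0 t1.
have -> : \sum_(n <= i < n + m) t ^+ i = t ^+ n * \sum_(i < m) t ^+ i.
  rewrite -{1}[n]add0n big_addn addKn big_mkord mulr_sumr.
  by apply: eq_bigr => i _; rewrite exprD mulrC.
rewrite ler_wpM2l ?exprn_ge0 // -[leRHS]div1r ler_pdivlMr ?subr_gt0 //.
by rewrite mulrC mulr1B_sum_expr; have := exprn_ge0 m t0; lra.
Qed.

Lemma bounded_of_eventually (u : nat -> R) N M :
  (forall k, 0 <= u k) -> (forall k, (N <= k)%N -> u k <= M) ->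
  exists K, forall k, u k <= K.
Proof.
move=> u0 uM; exists (\sum_(k < N) u k + M) => k.
have M0 : 0 <= M := le_trans (u0 N) (uM N (leqnn N)).
have S0 : 0 <= \sum_(k < N) u k by apply: sumr_ge0 => i _.
case: (ltnP k N) => [kN|/uM]; last by lra.
rewrite (bigD1 (Ordinal kN)) //= -addrA lerDl.
by apply: addr_ge0 => //; apply: sumr_ge0 => i _.
Qed.

(* Once [a <= rho / 2], each further factor gains [1/2] on [rho], and the
   powers of [1/2] eventually absorb the initial product. *)
Lemma prod_null_le_expr {a : nat -> R} :
  (forall m, 0 <= a m) ->
  (forall e, 0 < e -> exists N, forall m, (N <= m)%N -> a m <= e) ->
  forall rho, 0 < rho -> exists2 N, (0 < N)%N & \prod_(m < N) a m <= rho ^+ N.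
Proof.
move=> a0 a_null rho rho0.
have rho2 : 0 < rho / 2 by lra.
have [N0 hN0] := a_null _ rho2.
set P := \prod_(m < N0) a m.
have P0 : 0 <= P by apply: prodr_ge0 => m _.
have tail k : \prod_(m < N0 + k) a m <= P * (rho / 2) ^+ k.
  elim: k => [|k IH]; first by rewrite addn0 expr0 mulr1.
  rewrite addnS big_ord_recr /= exprSr (mulrA P).
  apply: ler_pM _ (a0 _) IH (hN0 _ (leq_addr _ _)).
  by apply: prodr_ge0 => m _.
set k := (Num.Def.archi_bound (P / rho ^+ N0)).+1.
have rN0 : 0 < rho ^+ N0 := exprn_gt0 _ rho0.
have Pk : P < 2 ^+ k * rho ^+ N0.
  rewrite -ltr_pdivrMr //; apply: lt_trans (archi_boundP (divr_ge0 P0 (ltW rN0))) _.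
  by rewrite -natrX ltr_nat (ltn_trans (ltnSn _) (ltn_expl _ (ltnSn 1))).
exists (N0 + k)%N; first by rewrite addnS.
apply: le_trans (tail k) _.
rewrite expr_div_n exprD mulrA ler_pdivrMr ?exprn_gt0 // mulrAC ler_pM2r ?exprn_gt0 //.
by rewrite mulrC ltW.
Qed.

End RealSequences.

Lemma unitr1B_of_expr {A : unitRingType} {g : A} {n : nat} :
  1 - g ^+ n \is a GRing.unit -> 1 - g \is a GRing.unit.
Proof.
by rewrite -(mulr1B_sum_expr g n) (unitrM_comm (commr1B_sum_expr g n)) => /andP[].
Qed.

Section SkewCommutation.
Context {F : comNzRingType} {A : algType F}.
Implicit Types (x y : A) (c : F) (e : {poly F}).

Lemma skew_commX {x y c} k : y * x = c *: (x * y) -> y ^+ k * x = c ^+ k *: (x * y ^+ k).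
Proof.
move=> yx; elim: k => [|k IH]; first by rewrite !expr0 mul1r mulr1 scale1r.
rewrite exprSr -mulrA yx -scalerAr (mulrA (y ^+ k)) IH -scalerAl scalerA -exprS.
by rewrite mulrA.
Qed.

Lemma horner_alg_skew {x y c} e : y * x = c *: (x * y) ->
  y * horner_alg x e = horner_alg (c *: x) e * y.
Proof.
move=> yx; elim/poly_ind: e => [|e a IH]; first by rewrite !rmorph0 mulr0 mul0r.
rewrite !rmorphD !rmorphM /= !horner_algX !horner_algC mulrDr mulrDl mulrA IH.
by rewrite -!mulrA yx scalerAl mulr_algl mulr_algr.
Qed.

Lemma horner_alg_scale x c e : horner_alg (c *: x) e = horner_alg x (e \Po (c *: 'X)).
Proof.
elim/poly_ind: e => [|e a IH]; first by rewrite comp_poly0 !rmorph0.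
rewrite comp_polyD comp_polyM comp_polyX comp_polyC !rmorphD !rmorphM /= IH.
by rewrite !horner_algC horner_algX linearZ /= horner_algX mulr_algl.
Qed.

End SkewCommutation.

Section QHull.
Context {R : realType} {q : R[i]} {S : set R[i]}.
Hypothesis qS : qhull q S = S.

Lemma qhull_fixed_mem0 : S 0.
Proof. by rewrite -qS; left. Qed.

Lemma qhull_fixed_memX k l : S l -> S (q ^+ k * l).
Proof. by move=> Sl; rewrite -qS; right; exists k; exists l. Qed.

End QHull.

Section RationalCalculus.
Context {R : realType} {B : unitAlgType R[i]}.
Implicit Types (x y : B) (c : R[i]) (e num den : {poly R[i]}).

Lemma rat_at_skew {x y c num den} : y * x = c *: (x * y) ->
  horner_alg x den \is a GRing.unit -> horner_alg (c *: x) den \is a GRing.unit ->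
  y * rat_at num den x = rat_at num den (c *: x) * y.
Proof.
move=> yx dU dcU; rewrite /rat_at mulrA (horner_alg_skew _ yx) -!mulrA; congr (_ * _).
by rewrite -[RHS](mulrK dU) -(mulrA _^-1) (horner_alg_skew _ yx) mulKr.
Qed.

(* The polynomial splits into linear factors [l - x], each invertible off the spectrum. *)
Lemma horner_alg_unit x e : e != 0 -> (forall l, spectrum x l -> e.[l] != 0) ->
  horner_alg x e \is a GRing.unit.
Proof.
move=> e0 eS; have [rs e_eq] := closed_field_poly_normal e.
rewrite e_eq linearZ /= rmorph_prod /= mulr_algl scaler_unit ?unitfE ?lead_coef_eq0 //.
apply: unitr_prod_in => z zrs _.
rewrite rmorphB /= horner_algX horner_algC -opprB unitrN.
apply/negPn/negP => /negP zS; have := eS z zS; rewrite e_eq hornerZ.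
by move: (root_prod_XsubC rs z); rewrite zrs => /rootP ->; rewrite mulr0 eqxx.
Qed.

Lemma horner_alg_scale_unit {q x den} k : qhull q (spectrum x) = spectrum x ->
  (forall l, spectrum x l -> den.[l] != 0) ->
  horner_alg (q ^+ k *: x) den \is a GRing.unit.
Proof.
move=> hull dS; rewrite horner_alg_scale.
have ev l : (den \Po (q ^+ k *: 'X)).[l] = den.[q ^+ k * l].
  by rewrite horner_comp hornerZ hornerX.
apply: horner_alg_unit => [|l Sl]; last by rewrite ev; apply/dS/(qhull_fixed_memX hull).
apply: contraNneq (dS 0 (qhull_fixed_mem0 hull)) => d0.
by have := ev 0; rewrite mulr0 d0 horner0 => <-.
Qed.

End RationalCalculus.

Section BanachAlgebra.
Context {R : realType} {B : unitAlgType R[i]} {nrm : B -> R}.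
Hypothesis nrmP : is_banach_algebra_norm nrm.
Implicit Types (u v h z : B).

Lemma nrm_ge0 u : 0 <= nrm u.
Proof. by case: nrmP. Qed.

Lemma nrm_eq0 u : nrm u = 0 -> u = 0.
Proof. by case: nrmP => _ [+ _]; apply. Qed.

Lemma nrmD u v : nrm (u + v) <= nrm u + nrm v.
Proof. by case: nrmP => _ [_ []]. Qed.

Lemma nrmZ a u : nrm (a *: u) = normc a * nrm u.
Proof. by case: nrmP => _ [_ [_ [h _]]]; apply: complexI; rewrite h normcE rmorphM. Qed.

Lemma nrmM u v : nrm (u * v) <= nrm u * nrm v.
Proof. by case: nrmP => _ [_ [_ [_ []]]]. Qed.

Lemma nrm1 : nrm 1 = 1.
Proof. by case: nrmP => _ [_ [_ [_ [_ []]]]]. Qed.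

Lemma nrm0 : nrm 0 = 0.
Proof. by rewrite -(scale0r (0 : B)) nrmZ Normc.normc0 mul0r. Qed.

Lemma nrmN u : nrm (- u) = nrm u.
Proof. by rewrite -scaleN1r nrmZ normcN Normc.normc1 mul1r. Qed.

Lemma nrmB u v : nrm (u - v) <= nrm u + nrm v.
Proof. by rewrite -(nrmN v) nrmD. Qed.

Lemma nrm_alg a : nrm a%:A = normc a.
Proof. by rewrite nrmZ nrm1 mulr1. Qed.

Lemma nrm_sum {I : Type} {r : seq I} {P : pred I} {F : I -> B} :
  nrm (\sum_(i <- r | P i) F i) <= \sum_(i <- r | P i) nrm (F i).
Proof.
elim/big_rec2: _ => [|i y1 y2 _ h]; first by rewrite nrm0.
exact: le_trans (nrmD _ _) (lerD (lexx _) h).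
Qed.

Lemma nrmX u k : nrm (u ^+ k) <= nrm u ^+ k.
Proof.
elim: k => [|k IH]; first by rewrite !expr0 nrm1.
by rewrite !exprS; apply: le_trans (nrmM _ _) (ler_wpM2l (nrm_ge0 _) IH).
Qed.

Lemma nrm_small_eq0 u : (forall e, 0 < e -> nrm u < e) -> u = 0.
Proof.
move=> small; apply/nrm_eq0/eqP; rewrite eq_le nrm_ge0 andbT.
by apply/ler_addgt0Pr => e /small /ltW; rewrite add0r.
Qed.

Definition nrm_cvg (s : nat -> B) (l : B) :=
  forall e : R, 0 < e -> exists N, forall n, (N <= n)%N -> nrm (s n - l) < e.

Lemma nrm_complete (s : nat -> B) :
  (forall e : R, 0 < e -> exists N, forall m n, (N <= m)%N -> (N <= n)%N ->
     nrm (s m - s n) < e) ->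
  exists l, nrm_cvg s l.
Proof. by case: nrmP => _ [_ [_ [_ [_ [_ ]]]]]; apply. Qed.

Lemma nrm_cvg_unique {s l l'} : nrm_cvg s l -> nrm_cvg s l' -> l = l'.
Proof.
move=> sl sl'; apply/eqP; rewrite -subr_eq0; apply/eqP/nrm_small_eq0 => e e0.
have e2 : 0 < e / 2 by lra.
have [N hN] := sl _ e2; have [N' hN'] := sl' _ e2.
have /hN := leq_maxl N N'; have /hN' := leq_maxr N N'; set v := s _ => h' h.
have -> : l - l' = (v - l') - (v - l) by rewrite opprB [RHS]addrC addrA subrK.
by apply: le_lt_trans (nrmB _ _) _; lra.
Qed.

Lemma nrm_cvg_le {s t : nat -> B} {l l'} c : 0 <= c ->
  (forall n, nrm (t n - l') <= c * nrm (s n - l)) -> nrm_cvg s l -> nrm_cvg t l'.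
Proof.
move=> c0 ts sl e e0; have c1 : 0 < c + 1 by lra.
have [N hN] := sl (e / (c + 1)) (divr_gt0 e0 c1).
exists N => n /hN; rewrite ltr_pdivlMr // => sn.
by apply: le_lt_trans (ts n) _; have := nrm_ge0 (s n - l); nra.
Qed.

Lemma nrm_cvgMl c {s l} : nrm_cvg s l -> nrm_cvg (fun n => c * s n) (c * l).
Proof. by apply: nrm_cvg_le (nrm_ge0 c) _ => n; rewrite -mulrBr nrmM. Qed.

Lemma nrm_cvgMr c {s l} : nrm_cvg s l -> nrm_cvg (fun n => s n * c) (l * c).
Proof.
by apply: nrm_cvg_le (nrm_ge0 c) _ => n; rewrite -mulrBl [_ * nrm _]mulrC nrmM.
Qed.

Lemma nrm_cvg_expr {h} : nrm h < 1 -> nrm_cvg (fun n => h ^+ n) 0.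
Proof.
move=> h1 e e0; have h1' : `|nrm h| < 1 by rewrite ger0_norm ?nrm_ge0.
have e2 : 0 < e / 2 by lra.
have [N hN] := geometric_le_eventually 1 h1' e2.
exists N => n /hN; rewrite mul1r subr0 => hn.
by apply: le_lt_trans (le_trans (nrmX h n) hn) _; lra.
Qed.

Lemma nrm_cvg_sum_expr {h} : nrm h < 1 ->
  exists s, nrm_cvg (fun n => \sum_(i < n) h ^+ i) s.
Proof.
move=> h1; apply: nrm_complete => e e0; set t := nrm h.
have t01 : 0 <= t < 1 by rewrite nrm_ge0.
have t1 : `|t| < 1 by rewrite ger0_norm ?nrm_ge0.
have e2 : 0 < e / 2 by lra.
have [N hN] := geometric_le_eventually (1 - t)^-1 t1 e2.
have tail n m : nrm (\sum_(i < n + m) h ^+ i - \sum_(i < n) h ^+ i) <= (1 - t)^-1 * t ^+ n.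
  rewrite -!(big_mkord xpredT (fun i => h ^+ i)).
  rewrite (big_cat_nat (leq0n n) (leq_addr m n)) /= addrAC subrr add0r.
  apply: le_trans nrm_sum _; rewrite mulrC.
  apply: le_trans _ (geometric_tail_le t n m t01).
  by apply: ler_sum => i _; exact: nrmX.
exists N => m n mN nN.
wlog nm : m n mN nN / (n <= m)%N.
  move=> W; case: (leqP n m) => [|/ltnW] nm; first exact: W.
  by rewrite -nrmN opprB; apply: W.
rewrite -(subnKC nm); apply: le_lt_trans (tail n (m - n)%N) _.
by have := hN n nN; lra.
Qed.

Lemma unitr1B {h} : nrm h < 1 -> 1 - h \is a GRing.unit.
Proof.
move=> h1; have [s hs] := nrm_cvg_sum_expr h1.
have to1 : nrm_cvg (fun n => 1 - h ^+ n) 1.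
  apply: nrm_cvg_le ler01 _ (nrm_cvg_expr h1) => n.
  by rewrite addrC addKr nrmN subr0 mul1r.
have hl n : (1 - h) * \sum_(i < n) h ^+ i = 1 - h ^+ n := mulr1B_sum_expr h n.
have hr n : (\sum_(i < n) h ^+ i) * (1 - h) = 1 - h ^+ n.
  by rewrite -(commr1B_sum_expr h n).
apply/unitrP; exists s; split.
  apply: (nrm_cvg_unique (nrm_cvgMr (1 - h) hs)) => e /to1 [N hN].
  by exists N => n /hN; rewrite hr.
apply: (nrm_cvg_unique (nrm_cvgMl (1 - h) hs)) => e /to1 [N hN].
by exists N => n /hN; rewrite hl.
Qed.

Lemma nrm_inv1B {h} : nrm h < 1 -> nrm ((1 - h)^-1) <= (1 - nrm h)^-1.
Proof.
move=> h1; set w := (1 - h)^-1.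
have w_eq : w = 1 + h * w.
  by rewrite -(mulrV (unitr1B h1)) -/w mulrBl mul1r subrK.
have w_le : nrm w <= 1 + nrm h * nrm w.
  rewrite {1}w_eq; apply: le_trans (nrmD _ _) _; rewrite nrm1 lerD2l; exact: nrmM.
rewrite -[leRHS]div1r ler_pdivlMr ?subr_gt0 //.
by have := nrm_ge0 w; have := nrm_ge0 h; nra.
Qed.

(* Both halves use [|f^N|^(1/N) -> 0]: for [l != 0] through a Neumann series
   for [(f / l)^N], for [l = 0] because [1 <= |f^N| |f^-1|^N]. *)
Lemma quasinilpotent_of_expr_small u :
  (forall rho, 0 < rho -> exists2 N, (0 < N)%N & nrm (u ^+ N) <= rho ^+ N) ->
  quasinilpotent u.
Proof.
move=> small; rewrite /quasinilpotent /spectrum; apply/seteqP; split=> l /=.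
  apply: contra_notP => /eqP l0.
  have lc : 0 < normc l by rewrite normc_gt0.
  have l2 : 0 < normc l / 2 by lra.
  have [N N0 hN] := small _ l2.
  pose g := l^-1 *: u.
  have gN : nrm (g ^+ N) < 1.
    rewrite exprZn nrmZ normcX Normc.normcV.
    have li : 0 <= (normc l)^-1 by rewrite invr_ge0 ltW.
    apply: le_lt_trans (ler_wpM2l (exprn_ge0 _ li) hN) _.
    rewrite -exprMn mulKf ?lt0r_neq0 // exprn_ilt1 -?lt0n //; lra.
  have -> : l%:A - u = l *: (1 - g) by rewrite scalerBr scalerA mulfV // scale1r.
  by rewrite scaler_unit ?unitfE // (unitr1B_of_expr (unitr1B gN)).
move=> ->; rewrite scale0r sub0r unitrN => uU.
pose G := nrm u^-1; have G0 : 0 <= G := nrm_ge0 _.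
have G1 : 0 < (G + 1)^-1 by rewrite invr_gt0; lra.
have [N N0 hN] := small _ G1.
have : nrm (u ^+ N * u^-1 ^+ N) <= ((G + 1)^-1 * G) ^+ N.
  rewrite exprMn.
  exact: le_trans (nrmM _ _) (ler_pM (nrm_ge0 _) (nrm_ge0 _) hN (nrmX _ _)).
rewrite exprVn mulrV ?unitrX // nrm1.
apply/negP; rewrite -ltNge exprn_ilt1 -?lt0n //.
  by apply: mulr_ge0 => //; rewrite invr_ge0; lra.
by rewrite mulrC ltr_pdivrMr; lra.
Qed.

Lemma horner_alg_bounded (e : {poly R[i]}) r :
  exists b, forall z, nrm z <= r -> nrm (horner_alg z e) <= b.
Proof.
elim/poly_ind: e => [|e c [b hb]]; first by exists 0 => z _; rewrite rmorph0 nrm0.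
exists (b * r + normc c) => z zr; rewrite rmorphD rmorphM /= horner_algX horner_algC.
apply: le_trans (nrmD _ _) _; rewrite nrm_alg lerD2r.
exact: le_trans (nrmM _ _) (ler_pM (nrm_ge0 _) (nrm_ge0 _) (hb z zr) zr).
Qed.

Lemma horner_alg_bounded_vanishing (e : {poly R[i]}) r : e.[0] = 0 ->
  exists b, forall z, nrm z <= r -> nrm (horner_alg z e) <= b * nrm z.
Proof.
elim/poly_ind: e => [_|e c _]; first by exists 0 => z _; rewrite rmorph0 nrm0 mul0r.
rewrite hornerMXaddC mulr0 add0r => ->; have [b hb] := horner_alg_bounded e r.
exists b => z zr; rewrite rmorphD rmorphM /= horner_algX horner_algC scale0r addr0.
exact: le_trans (nrmM _ _) (ler_wpM2r (nrm_ge0 _) (hb z zr)).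
Qed.

(* Writing [den(z) = c (1 - h)] with [h = O(z)], the inverses are eventually
   bounded by [2 / |c|].  No invertibility is assumed: for a non-unit [u],
   [u^-1 = u], and only finitely many [k] precede the bound anyway. *)
Lemma horner_alg_inv_bounded {den : {poly R[i]}} {z : nat -> B} : den.[0] != 0 ->
  (forall e, 0 < e -> exists N, forall k, (N <= k)%N -> nrm (z k) <= e) ->
  exists K, forall k, nrm (horner_alg (z k) den)^-1 <= K.
Proof.
elim/poly_ind: den => [|den c _]; first by rewrite horner0 eqxx.
rewrite hornerMXaddC mulr0 add0r => c0 z0.
have [b hb] := horner_alg_bounded den 1.
have b0 : 0 <= b by apply: le_trans (nrm_ge0 _) (hb 0 _); rewrite nrm0 ler01.
have cb0 : 0 <= normc c^-1 * b := mulr_ge0 (normc_ge0 _) b0.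
set e := (2 * (normc c^-1 * b + 1))^-1.
have e0 : 0 < e by rewrite invr_gt0; lra.
have e1 : e <= 1 by rewrite invf_le1; lra.
have [N hN] := z0 e e0.
apply: (bounded_of_eventually _ N (2 * normc c^-1)) => [k|k kN].
  exact: nrm_ge0.
set h := - (c^-1 *: (horner_alg (z k) den * z k)).
have h_le : nrm h <= 2^-1.
  have zk := hN k kN.
  have Pz : nrm (horner_alg (z k) den * z k) <= b * e.
    exact: le_trans (nrmM _ _) (ler_pM (nrm_ge0 _) (nrm_ge0 _) (hb _ (le_trans zk e1)) zk).
  have ce : (normc c^-1 * b + 1) * e = 2^-1.
    by rewrite /e invfM mulrCA mulfV ?mulr1 // lt0r_neq0 //; lra.
  rewrite /h nrmN nrmZ; apply: le_trans (ler_wpM2l (normc_ge0 _) Pz) _.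
  by rewrite mulrA -ce ler_wpM2r ?(ltW e0) // lerDl ler01.
have h1 : nrm h < 1 by lra.
have -> : horner_alg (z k) (den * 'X + c%:P) = c *: (1 - h).
  rewrite rmorphD rmorphM /= horner_algX horner_algC /h opprK scalerDr scalerA.
  by rewrite mulfV // scale1r addrC.
rewrite invrZ ?unitfE ?unitr1B // nrmZ Normc.normcV mulrC ler_wpM2r ?invr_ge0 ?normc_ge0 //.
apply: le_trans (nrm_inv1B h1) _.
by rewrite -[leRHS]invrK lef_pV2 ?posrE; lra.
Qed.

Section TwistedSum.
Context {q : R[i]} {x y : B} {n : nat} {p d : nat -> {poly R[i]}}.
Hypothesis q_lt1 : normc q < 1.
Hypothesis yx : y * x = q *: (x * y).
Hypothesis hull : qhull q (spectrum x) = spectrum x.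
Hypothesis p0 : forall j : 'I_n, (p j.+1).[0] = 0.
Hypothesis dS : forall (j : 'I_n) l, spectrum x l -> (d j.+1).[l] != 0.

Local Notation f := (\sum_(j < n) rat_at (p j.+1) (d j.+1) x * y ^+ j.+1).
Local Notation Z := (\sum_(j < n) nrm y ^+ j.+1).

Let normq_lt1 : `|normc q| < 1.
Proof. by rewrite ger0_norm ?normc_ge0. Qed.

Lemma nrm_scale_expr_small e : 0 < e ->
  exists N, forall k, (N <= k)%N -> nrm (q ^+ k *: x) <= e.
Proof.
move=> e0; have [N hN] := geometric_le_eventually (nrm x) normq_lt1 e0.
by exists N => k /hN; rewrite nrmZ normcX mulrC.
Qed.

Lemma rat_at_scale_bounded num den : num.[0] = 0 ->
  (forall l, spectrum x l -> den.[l] != 0) ->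
  exists C, forall k, nrm (rat_at num den (q ^+ k *: x)) <= C * normc q ^+ k.
Proof.
move=> num0 denS.
have [b hb] := horner_alg_bounded_vanishing num (nrm x) num0.
have [K hK] := horner_alg_inv_bounded (denS 0 (qhull_fixed_mem0 hull)) nrm_scale_expr_small.
exists (b * nrm x * K) => k.
have zx : nrm (q ^+ k *: x) = normc q ^+ k * nrm x by rewrite nrmZ normcX.
have zle : nrm (q ^+ k *: x) <= nrm x.
  by rewrite zx ler_piMl ?nrm_ge0 // exprn_ile1 ?normc_ge0 // ltW.
apply: le_trans (nrmM _ _) _.
apply: le_trans (ler_pM (nrm_ge0 _) (nrm_ge0 _) (hb _ zle) (hK k)) _.
rewrite zx; have -> : b * (normc q ^+ k * nrm x) * K = b * nrm x * K * normc q ^+ k.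
  by ring.
exact: lexx.
Qed.

Lemma rat_coef_bounded : exists2 C, 0 <= C &
  forall (j : 'I_n) k, nrm (rat_at (p j.+1) (d j.+1) (q ^+ k *: x)) <= C * normc q ^+ k.
Proof.
have /choice [C hC] : forall j : 'I_n, exists C : R,
    forall k, nrm (rat_at (p j.+1) (d j.+1) (q ^+ k *: x)) <= C * normc q ^+ k.
  by move=> j; exact: rat_at_scale_bounded (p0 j) (dS j).
exists (\sum_j `|C j|) => [|j k]; first by apply: sumr_ge0 => j _.
apply: le_trans (hC j k) (ler_wpM2r (exprn_ge0 _ (normc_ge0 q)) _).
rewrite (bigD1 j) //= (le_trans (ler_norm _)) // lerDl.
by apply: sumr_ge0 => i _.
Qed.

Lemma rat_at_skewX (j : 'I_n) k :
  y ^+ k * rat_at (p j.+1) (d j.+1) x = rat_at (p j.+1) (d j.+1) (q ^+ k *: x) * y ^+ k.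
Proof.
apply: rat_at_skew (skew_commX k yx) _ (horner_alg_scale_unit k hull (dS j)).
by have := horner_alg_scale_unit 0 hull (dS j); rewrite expr0 scale1r.
Qed.

Definition y_expansion (N : nat) (b : R) (g : B) :=
  exists (I : finType) (a : I -> B) (k : I -> nat),
    [/\ g = \sum_i a i * y ^+ k i, forall i, (N <= k i)%N &
        \sum_i nrm (a i) * nrm y ^+ k i <= b].

Lemma nrm_le_y_expansion {N b g} : y_expansion N b g -> nrm g <= b.
Proof.
case=> I [a [k [-> _ hb]]]; apply: le_trans nrm_sum (le_trans _ hb).
apply: ler_sum => i _.
exact: le_trans (nrmM _ _) (ler_wpM2l (nrm_ge0 _) (nrmX _ _)).
Qed.

Lemma y_expansion1 : y_expansion 0 1 1.
Proof.
exists 'I_1, (fun _ => 1), (fun _ => 0%N).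
by split; rewrite ?big_ord1 ?expr0 ?mulr1 ?nrm1.
Qed.

Lemma y_expansion_mulf C N b g : 0 <= C ->
  (forall (j : 'I_n) k, nrm (rat_at (p j.+1) (d j.+1) (q ^+ k *: x)) <= C * normc q ^+ k) ->
  y_expansion N b g -> y_expansion N.+1 (b * (C * Z * normc q ^+ N)) (g * f).
Proof.
move=> C0 hC [I [a [k [-> kN hb]]]].
pose a' (ij : I * 'I_n) := a ij.1 * rat_at (p ij.2.+1) (d ij.2.+1) (q ^+ k ij.1 *: x).
exists (I * 'I_n)%type, a', (fun ij : I * 'I_n => (k ij.1 + ij.2.+1)%N); split.
- rewrite -(pair_bigA _ (fun (i : I) (j : 'I_n) => a' (i, j) * y ^+ (k i + j.+1))) /=.
  rewrite mulr_suml; apply: eq_bigr => i _; rewrite mulr_sumr; apply: eq_bigr => j _.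
  by rewrite -mulrA (mulrA (y ^+ k i)) rat_at_skewX -!mulrA exprD.
- by move=> [i j] /=; rewrite addnS ltnS (leq_trans (kN i) (leq_addr _ _)).
have y0 := nrm_ge0 y.
apply: le_trans (_ : \sum_(ij : I * 'I_n) (nrm (a ij.1) * nrm y ^+ k ij.1) *
   (C * normc q ^+ N * nrm y ^+ ij.2.+1) <= _).
  apply: ler_sum => [[i j]] _ /=.
  have a'_le : nrm (a' (i, j)) <= nrm (a i) * (C * normc q ^+ N).
    apply: le_trans (nrmM _ _) (ler_wpM2l (nrm_ge0 _) (le_trans (hC j _) _)).
    by rewrite ler_wpM2l // ler_wiXn2l ?normc_ge0 ?(ltW q_lt1).
  rewrite exprD mulrA; apply: le_trans (ler_wpM2r (exprn_ge0 _ y0)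
    (ler_wpM2r (exprn_ge0 _ y0) a'_le)) _.
  have -> : nrm (a i) * (C * normc q ^+ N) * nrm y ^+ k i * nrm y ^+ j.+1 =
    nrm (a i) * nrm y ^+ k i * (C * normc q ^+ N * nrm y ^+ j.+1) by ring.
  exact: lexx.
rewrite -(pair_bigA _ (fun (i : I) (j : 'I_n) => nrm (a i) * nrm y ^+ k i *
  (C * normc q ^+ N * nrm y ^+ j.+1))) /= -big_distrlr /= -mulr_sumr mulrAC.
apply: ler_wpM2r hb; apply: mulr_ge0 (exprn_ge0 _ (normc_ge0 _)).
by apply: mulr_ge0 C0 _; apply: sumr_ge0 => j _; exact: exprn_ge0.
Qed.

Lemma twisted_sum_expr_small rho : 0 < rho ->
  exists2 N, (0 < N)%N & nrm (f ^+ N) <= rho ^+ N.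
Proof.
move=> rho0; have [C C0 hC] := rat_coef_bounded.
pose a m := C * Z * normc q ^+ m.
have a0 m : 0 <= a m.
  apply: mulr_ge0 (exprn_ge0 _ (normc_ge0 _)); apply: mulr_ge0 C0 _.
  by apply: sumr_ge0 => j _; exact: exprn_ge0 (nrm_ge0 _).
have fN N : y_expansion N (\prod_(m < N) a m) (f ^+ N).
  elim: N => [|N IH]; first by rewrite expr0 big_ord0; exact: y_expansion1.
  by rewrite exprSr big_ord_recr; exact: y_expansion_mulf.
have [N N0 hN] := prod_null_le_expr a0
  (fun e e0 => geometric_le_eventually (C * Z) normq_lt1 e0) _ rho0.
by exists N => //; apply: le_trans (nrm_le_y_expansion (fN N)) hN.
Qed.

Lemma twisted_sum_quasinilpotent : quasinilpotent f.
Proof. exact: quasinilpotent_of_expr_small twisted_sum_expr_small. Qed.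

End TwistedSum.
End BanachAlgebra.

Theorem lemma3p4 (R : realType) (B : unitAlgType R[i]) (nrm : B -> R)
  (q : R[i]) (x y : B) (n : nat) (p d : nat -> {poly R[i]}) :
  is_banach_algebra_norm nrm ->
  0 < `|q| < 1 ->
  x * y = q^-1 *: (y * x) ->
  qhull q (spectrum x) = spectrum x ->
  (forall k, (1 <= k <= n)%N -> forall l, spectrum x l -> (d k).[l] != 0) ->
  (forall k, (1 <= k <= n)%N -> (p k).[0] / (d k).[0] = 0) ->
  quasinilpotent (\sum_(1 <= k < n.+1) rat_at (p k) (d k) x * y ^+ k).
Proof.
move=> nrmP /andP[q_gt0 q_lt1] xy hull dS pd0.
have nq1 : normc q < 1 by rewrite -ltcR -normcE.
have yx : y * x = q *: (x * y) by rewrite xy scalerA mulfV ?scale1r // -normr_gt0.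
have dS' (j : 'I_n) l : spectrum x l -> (d j.+1).[l] != 0 by apply: dS; rewrite ltn_ord.
have p0 (j : 'I_n) : (p j.+1).[0] = 0.
  move/eqP: (pd0 j.+1 (ltn_ord j)).
  by rewrite mulf_eq0 invr_eq0 (negbTE (dS' j 0 (qhull_fixed_mem0 hull))) orbF => /eqP.
rewrite big_add1 /= big_mkord.
exact (twisted_sum_quasinilpotent nrmP nq1 yx hull p0 dS').
Qed.
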